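(* Let $\{(X_n, w_n)\}_{n \in \mathbb{N}}$ be a sequence of finite $k$-regular marked graphs that strongly converges to the $k$-regular marked graph $(X, w)$, with covering maps $p_n: X_{n+1} \to X_n$ and $\rho_n: X \to X_n$ as in the definition of strong convergence. Let $F$ be a finite $d$-regular graph, let $\phi_1$ be an $\mathrm{Aut}(F)$-voltage assignment on $X_1$, define inductively $\phi_{n+1}(uv) = \phi_n(p_n(u)p_n(v))$ on $X_{n+1}$, and $\phi(uv) = \phi_1(\rho_1(u)\rho_1(v))$ on $X$. Then for each $i \in V(F)$ the covering sequence $\{(X_n \times^{\phi_n} F, (w_n, i))\}_{n \in \mathbb{N}}$ strongly converges to $(X \times^{\phi} F, (w, i))$.
   Context: A covering map $p: \tilde G \to G$ is a graph map that restricts to a bijection from the neighbour set $N(x)$ onto $N(p(x))$ for each vertex $x$. $B_X(w,s)$ denotes the combinatorial ball of radius $s$ about $w$. A sequence $\{(X_n,w_n)\}_{n\ge1}$ of finite marked graphs strongly converges to $(X,w)$ if: (1) every $X_n$ is $r$-regular (for some fixed $r$) and there are covering maps $p_n: X_{n+1} \to X_n$; (2) $X$ is $r$-regular; (3) there are covering maps $\rho_n: X \to X_n$ with $\rho_1 = p_1 \circ \cdots \circ p_{n-1} \circ \rho_n$ for all $n$, and for each $n$ the restriction of $\rho_n$ to $B_X(w,s_n)$ is an isometry onto $B_{X_n}(w_n,s_n)$, where $s_n \to \infty$. For a graph $G$, $E(\overrightarrow{G})$ is the set of ordered edges; an $\mathrm{Aut}(F)$-voltage assignment on $G$ is a map $\phi: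 E(\overrightarrow{G}) \to \mathrm{Aut}(F)$ with $\phi(uv) = \phi(vu)^{-1}$. The graph bundle $G \times^{\phi} F$ has vertex set $V(G)\times V(F)$, with $(u,i) \sim (v,j)$ iff either $u \sim v$ and $j = i^{\phi(uv)}$ (the image of $i$ under $\phi(uv)$), or $u = v$ and $i \sim j$ in $F$. *)

From Stdlib Require Import List Arith.
Import ListNotations.
Set Implicit Arguments.

(* A graph: a vertex type and an adjacency relation (Prop-valued, so that
   infinite graphs such as the limit graph X are allowed). *)
Record graph := Graph { V : Type ; adj : V -> V -> Prop }.
Arguments adj {g} _ _.

Definition simple_graph (G : graph) : Prop :=
  (forall x y : V G, adj x y -> adj y x) /\ (forall x : V G, ~ adj x x).

Definition finite_graph (G : graph) : Prop :=
  exists l : list (V G), forall v, In v l.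

Definition regular (r : nat) (G : graph) : Prop :=
  forall x : V G, exists l : list (V G),
    NoDup l /\ length l = r /\ forall y, In y l <-> adj x y.

Definition covering (G H : graph) (p : V G -> V H) : Prop :=
  (forall x y, adj x y -> adj (p x) (p y)) /\
  (forall x y z, adj x y -> adj x z -> p y = p z -> y = z) /\
  (forall x y', adj (p x) y' -> exists y, adj x y /\ p y = y').

Inductive walk (G : graph) : nat -> V G -> V G -> Prop :=
| walk0 : forall x, walk G 0 x x
| walkS : forall n x y z, adj x y -> walk G n y z -> walk G (S n) x z.

Definition dist_le (G : graph) (x y : V G) (n : nat) : Prop :=
  exists m, m <= n /\ walk G m x y.

Definition in_ball (G : graph) (w : V G) (s : nat) (x : V G) : Prop :=
  dist_le G w x s.

Definition ball_isometry (G H : graph) (f : V G -> V H) (w : V G) (w' : V H)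
  (s : nat) : Prop :=
  f w = w' /\
  (forall x, in_ball G w s x -> in_ball H w' s (f x)) /\
  (forall x', in_ball H w' s x' -> exists x, in_ball G w s x /\ f x = x') /\
  (forall x y, in_ball G w s x -> in_ball G w s y ->
     forall m, dist_le G x y m <-> dist_le H (f x) (f y) m).

Fixpoint down (X : nat -> graph) (p : forall n, V (X (S n)) -> V (X n))
  (n : nat) : V (X n) -> V (X 0) :=
  match n return V (X n) -> V (X 0) with
  | 0 => fun x => x
  | S m => fun x => down X p m (p m x)
  end.

Definition tends_to_infty (s : nat -> nat) : Prop :=
  forall M, exists N, forall n, N <= n -> M <= s n.

(* Strong convergence of (X_n, w_n) to (Y, y), witnessed by the given
   covering maps p and rho (indices shifted: paper's n >= 1 is our n >= 0). *)
Definition strongly_converges_via (X : nat -> graph) (w : forall n, V (X n))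
  (p : forall n, V (X (S n)) -> V (X n)) (Y : graph) (y : V Y)
  (rho : forall n, V Y -> V (X n)) : Prop :=
  exists r : nat,
    (forall n, finite_graph (X n) /\ regular r (X n)) /\
    (forall n, covering (X (S n)) (X n) (p n)) /\
    regular r Y /\
    (forall n, covering Y (X n) (rho n)) /\
    (forall n x, rho 0 x = down X p n (rho n x)) /\
    exists s : nat -> nat, tends_to_infty s /\
      forall n, ball_isometry Y (X n) (rho n) y (w n) (s n).

Definition strongly_converges (X : nat -> graph) (w : forall n, V (X n))
  (Y : graph) (y : V Y) : Prop :=
  exists (p : forall n, V (X (S n)) -> V (X n))
         (rho : forall n, V Y -> V (X n)),
    strongly_converges_via X w p Y y rho.

Definition automorphism (F : graph) (f : V F -> V F) : Prop :=
  (exists g : V F -> V F, (forall i, g (f i) = i) /\ (forall i, f (g i) = i)) /\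
  (forall i j, adj i j <-> adj (f i) (f j)).

(* Aut(F)-voltage assignment on G: phi u v is the voltage of the ordered edge
   uv (values on non-edges are irrelevant); phi(uv) = phi(vu)^-1. *)
Definition voltage (G F : graph) (phi : V G -> V G -> V F -> V F) : Prop :=
  forall u v, adj u v ->
    automorphism F (phi u v) /\
    (forall i, phi v u (phi u v i) = i) /\ (forall i, phi u v (phi v u i) = i).

Definition bundle (G F : graph) (phi : V G -> V G -> V F -> V F) : graph :=
  @Graph (V G * V F)%type
    (fun a b => (adj (fst a) (fst b) /\ snd b = phi (fst a) (fst b) (snd a))
             \/ (fst a = fst b /\ adj (snd a) (snd b))).

Fixpoint lift_voltage (X : nat -> graph) (p : forall n, V (X (S n)) -> V (X n))
  (F : graph) (phi1 : V (X 0) -> V (X 0) -> V F -> V F) (n : nat)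
  : V (X n) -> V (X n) -> V F -> V F :=
  match n return V (X n) -> V (X n) -> V F -> V F with
  | 0 => phi1
  | S m => fun u v => lift_voltage X p F phi1 m (p m u) (p m v)
  end.

(** A covering of the base lifts fibrewise to a covering of graph bundles
    as soon as the voltages are pulled back along it, and regularity and
    finiteness of bundles are immediate; the real point is the ball isometry.
    A covering of a symmetric graph that is injective on a ball of radius [s]
    is an isometry on the concentric ball of radius [s/3]: a short walk
    between two images lifts, from one endpoint, to a walk that stays within
    distance [s] of the centre, hence ends at the other endpoint; a long walk
    is never shorter than the detour through the centre.  Injectivity of
    [rho n] on [B_Y(y, s n)] passes to the bundle because walks in a bundle
    project to walks in the base that are no longer. *)

From Stdlib Require Import List Arith Lia FinFun.
Set Implicit Arguments.
Unset Strict Implicit.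

Lemma map_walk (G H : graph) (f : V G -> V H) :
  (forall x y, adj x y -> adj (f x) (f y)) ->
  forall n x z, walk G n x z -> walk H n (f x) (f z).
Proof.
  intros Hhom n x z W; induction W.
  - constructor.
  - econstructor; eauto.
Qed.

Lemma covering_lift_walk (G H : graph) (f : V G -> V H) :
  covering G H f -> forall n u z', walk H n u z' ->
  forall x, f x = u -> exists z, walk G n x z /\ f z = z'.
Proof.
  intros [_ [_ Hlift]] n u z' W; induction W as [u | n u v z' Huv W IHW];
    intros x Hx.
  - exists x; split; [constructor | exact Hx].
  - subst u. destruct (Hlift x v Huv) as [x' [Hxx' Hx']].
    destruct (IHW x' Hx') as [z [Wz Hz]].
    exists z; split; [econstructor; eauto | exact Hz].
Qed.

Lemma walk_cat (G : graph) n m x y z :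
  walk G n x y -> walk G m y z -> walk G (n + m) x z.
Proof.
  intros W; revert m z; induction W; intros m z' W'; simpl; auto.
  econstructor; eauto.
Qed.

Lemma walk_rcons (G : graph) n x y z :
  walk G n x y -> adj y z -> walk G (S n) x z.
Proof.
  intros W Hyz. replace (S n) with (n + 1) by lia.
  apply walk_cat with y; [exact W | econstructor; [exact Hyz | constructor]].
Qed.

Lemma walk_rev (G : graph) :
  (forall x y : V G, adj x y -> adj y x) ->
  forall n x y, walk G n x y -> walk G n y x.
Proof.
  intros Hsym n x y W; induction W.
  - constructor.
  - eapply walk_rcons; eauto.
Qed.

Lemma walk0_eq (G : graph) (x y : V G) : walk G 0 x y -> x = y.
Proof. intros W; inversion W; reflexivity. Qed.

Lemma ball_isometry_injective (G H : graph) (f : V G -> V H) g h s :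
  ball_isometry G H f g h s ->
  forall x y, in_ball G g s x -> in_ball G g s y -> f x = f y -> x = y.
Proof.
  intros [_ [_ [_ Hdist]]] x y Hx Hy Hxy.
  assert (Hd0 : dist_le H (f x) (f y) 0) by (exists 0; rewrite Hxy; split; constructor).
  apply (Hdist x y Hx Hy 0) in Hd0 as [m [Hm W]].
  replace m with 0 in W by lia. exact (walk0_eq W).
Qed.

Lemma covering_ball_isometry (G H : graph) (f : V G -> V H) (g : V G) s s' :
  covering G H f -> (forall a b : V G, adj a b -> adj b a) ->
  (forall x y, in_ball G g s x -> in_ball G g s y -> f x = f y -> x = y) ->
  3 * s' <= s ->
  ball_isometry G H f g (f g) s'.
Proof.
  intros Hcov Hsym Hinj Hs.
  pose proof (proj1 Hcov) as Hhom.
  split; [reflexivity | split; [| split]].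
  - intros x [m [Hm W]]. exists m. split; [exact Hm | exact (map_walk Hhom W)].
  - intros x' [m [Hm W]].
    destruct (covering_lift_walk Hcov W (x := g) eq_refl) as [x [Wx Hx]].
    exists x. split; [exists m; auto | exact Hx].
  - intros x y [mx [Hmx Wx]] [my [Hmy Wy]] m. split.
    + intros [m0 [Hm0 W]]. exists m0. split; [exact Hm0 | exact (map_walk Hhom W)].
    + intros [m0 [Hm0 W]].
      destruct (le_lt_dec (mx + my) m0) as [Hlong | Hshort].
      * exists (mx + my). split; [lia |].
        exact (walk_cat (walk_rev Hsym Wx) Wy).
      * destruct (covering_lift_walk Hcov W (x := x) eq_refl) as [z [Wz Hz]].
        (* [z] lies within [mx + m0 < 3 * s' <= s] of [g]. *)
        assert (z = y) as <-.
        { apply Hinj; [exists (mx + m0) | exists my | exact Hz];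
            split; [lia | exact (walk_cat Wx Wz) | lia | exact Wy]. }
        exists m0. split; [exact Hm0 | exact Wz].
Qed.

Definition fiberwise {A B C : Type} (f : A -> B) (a : A * C) : B * C :=
  (f (fst a), snd a).

Lemma bundle_walk_proj (G F : graph) phi n (a b : V (bundle G F phi)) :
  walk (bundle G F phi) n a b -> exists m, m <= n /\ walk G m (fst a) (fst b).
Proof.
  intros W; induction W as [a | n a c b Hac W [m [Hm Wm]]].
  - exists 0; split; [lia | constructor].
  - destruct Hac as [[Hac _] | [Eac _]].
    + exists (S m); split; [lia | econstructor; eauto].
    + exists m; split; [lia |]. rewrite Eac; exact Wm.
Qed.

Lemma in_ball_bundle_proj (G F : graph) phi (g : V G) (i : V F) s
  (a : V (bundle G F phi)) :
  in_ball (bundle G F phi) (g, i) s a -> in_ball G g s (fst a).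
Proof.
  intros [n [Hn W]]. destruct (bundle_walk_proj W) as [m [Hm Wm]].
  exists m. split; [lia | exact Wm].
Qed.

Lemma fiberwise_injective_on_ball (G H F : graph) phi (f : V G -> V H)
  (g : V G) (i : V F) s :
  (forall x y, in_ball G g s x -> in_ball G g s y -> f x = f y -> x = y) ->
  forall a b : V (bundle G F phi),
    in_ball (bundle G F phi) (g, i) s a -> in_ball (bundle G F phi) (g, i) s b ->
    fiberwise f a = fiberwise f b -> a = b.
Proof.
  intros Hinj [x j] [z l] Ha Hb E. injection E as Exz Ejl.
  apply in_ball_bundle_proj in Ha, Hb.
  f_equal; [exact (Hinj x z Ha Hb Exz) | exact Ejl].
Qed.

Lemma covering_bundle (G H F : graph) (f : V G -> V H) phiG phiH :
  covering G H f -> (forall x : V H, ~ adj x x) ->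
  (forall u v j, phiG u v j = phiH (f u) (f v) j) ->
  covering (bundle G F phiG) (bundle H F phiH) (fiberwise f).
Proof.
  intros [Hhom [Hinj Hlift]] Hirr Hphi. unfold fiberwise.
  split; [| split].
  - intros [x i] [z j] Hxz; cbn in *. destruct Hxz as [[Hxz Ej] | [Exz Hij]].
    + left. split; [auto | rewrite Ej; apply Hphi].
    + right. split; [congruence | exact Hij].
  - intros [x i] [y j] [z l] Hxy Hxz E; cbn in *. injection E as Eyz Ejl.
    destruct Hxy as [[Hxy Ej] | [Exy Hij]], Hxz as [[Hxz El] | [Exz Hil]].
    + f_equal; [eapply Hinj; eauto | congruence].
    + subst z. apply Hhom in Hxy. rewrite Eyz in Hxy. contradiction (Hirr _ Hxy).
    + subst y. apply Hhom in Hxz. rewrite <- Eyz in Hxz. contradiction (Hirr _ Hxz).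
    + congruence.
  - intros [x i] [z' l] Hxz; cbn in *. destruct Hxz as [[Hxz El] | [Exz Hil]].
    + destruct (Hlift x z' Hxz) as [z [Hz Ez]]. exists (z, l). cbn.
      split; [left; split; [exact Hz | rewrite Hphi, Ez; exact El] | congruence].
    + exists (x, l). cbn. split; [right; auto | congruence].
Qed.

Lemma regular_bundle (G F : graph) phi k d :
  regular k G -> regular d F -> (forall x : V G, ~ adj x x) ->
  regular (k + d) (bundle G F phi).
Proof.
  intros HG HF Hirr [u i].
  destruct (HG u) as [lG [NG [LG IG]]], (HF i) as [lF [NF [LF IF]]].
  exists (map (fun v => (v, phi u v i)) lG ++ map (fun j => (u, j)) lF).
  split; [| split].
  - apply NoDup_app.
    + apply Injective_map_NoDup; [intros a b E; injection E; auto | exact NG].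
    + apply Injective_map_NoDup; [intros a b E; injection E; auto | exact NF].
    + intros a Ha Hb. apply in_map_iff in Ha as [v [<- Hv]], Hb as [j [E _]].
      injection E as <- _. apply IG in Hv. exact (Hirr _ Hv).
  - rewrite length_app, !length_map. lia.
  - intros [v j]. rewrite in_app_iff, !in_map_iff. cbn. split.
    + intros [[v' [E Hv]] | [j' [E Hj]]]; injection E as <- <-.
      * left. split; [apply IG; exact Hv | reflexivity].
      * right. split; [reflexivity | apply IF; exact Hj].
    + intros [[Huv ->] | [<- Hij]].
      * left. exists v. split; [reflexivity | apply IG; exact Huv].
      * right. exists j. split; [reflexivity | apply IF; exact Hij].
Qed.

Lemma finite_bundle (G F : graph) phi :
  finite_graph G -> finite_graph F -> finite_graph (bundle G F phi).
Proof.
  intros [lG HG] [lF HF]. exists (list_prod lG lF). intros [u i].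
  apply in_prod_iff; auto.
Qed.

Lemma voltage_comap (G H F : graph) (f : V G -> V H) phi :
  (forall x y, adj x y -> adj (f x) (f y)) ->
  voltage H F phi -> voltage G F (fun u v => phi (f u) (f v)).
Proof. intros Hhom Hphi u v Huv. exact (Hphi _ _ (Hhom u v Huv)). Qed.

Lemma simple_bundle (G F : graph) phi :
  simple_graph G -> simple_graph F -> voltage G F phi ->
  simple_graph (bundle G F phi).
Proof.
  intros [HsymG HirrG] [HsymF HirrF] Hphi. split.
  - intros [u i] [v j] [[Huv Ej] | [Euv Hij]]; cbn in *.
    + left. split; [auto |]. subst j. symmetry. apply (Hphi u v Huv).
    + right. auto.
  - intros [u i] [[Huu _] | [_ Hii]]; [exact (HirrG u Huu) | exact (HirrF i Hii)].
Qed.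

Lemma lift_voltage_down (X : nat -> graph) (p : forall n, V (X (S n)) -> V (X n))
  (F : graph) phi1 n a b :
  lift_voltage X p F phi1 n a b = phi1 (down X p n a) (down X p n b).
Proof. revert a b; induction n; intros a b; simpl; auto. Qed.

Lemma down_fiberwise (X : nat -> graph) (p : forall n, V (X (S n)) -> V (X n))
  (F : graph) (phi : forall n, V (X n) -> V (X n) -> V F -> V F) n a :
  down (fun n => bundle (X n) F (phi n)) (fun n => fiberwise (p n)) n a
  = fiberwise (down X p n) a.
Proof.
  revert a; induction n; intros [x i]; simpl; [reflexivity |].
  rewrite IHn. reflexivity.
Qed.

Lemma tends_to_infty_div (s : nat -> nat) c :
  c <> 0 -> tends_to_infty s -> tends_to_infty (fun n => s n / c).
Proof.
  intros Hc Hs M. destruct (Hs (c * M)) as [N HN]. exists N. intros n Hn.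
  apply Nat.div_le_lower_bound; [lia | exact (HN n Hn)].
Qed.

Theorem theorem2p15 (k d : nat) (X : nat -> graph) (w : forall n, V (X n))
  (p : forall n, V (X (S n)) -> V (X n)) (Y : graph) (y : V Y)
  (rho : forall n, V Y -> V (X n)) (F : graph)
  (phi1 : V (X 0) -> V (X 0) -> V F -> V F) :
  (forall n, simple_graph (X n)) -> simple_graph Y ->
  (forall n, regular k (X n)) -> regular k Y ->
  strongly_converges_via X w p Y y rho ->
  simple_graph F -> finite_graph F -> regular d F ->
  voltage (X 0) F phi1 ->
  forall i : V F,
    strongly_converges
      (fun n => bundle (X n) F (lift_voltage X p F phi1 n))
      (fun n => (w n, i))
      (bundle Y F (fun u v => phi1 (rho 0 u) (rho 0 v)))
      (y, i).
Proof.
  intros HsX HsY HrX HrY Hconv HsF HfinF HrF Hvolt i.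
  destruct Hconv as [r [Hfin [Hcovp [_ [Hcovr [Hdown [s [Hs Hiso]]]]]]]].
  assert (HirrX : forall n (x : V (X n)), ~ adj x x) by (intro n; apply HsX).
  assert (HphiY : forall n u v j, phi1 (rho 0 u) (rho 0 v) j
                    = lift_voltage X p F phi1 n (rho n u) (rho n v) j).
  { intros n u v j. rewrite lift_voltage_down, !(Hdown n). reflexivity. }
  assert (HcovY : forall n, covering (bundle Y F (fun u v => phi1 (rho 0 u) (rho 0 v)))
                     (bundle (X n) F (lift_voltage X p F phi1 n)) (fiberwise (rho n))).
  { intro n. apply covering_bundle; [apply Hcovr | apply HirrX | apply HphiY]. }
  exists (fun n => fiberwise (p n)), (fun n => fiberwise (rho n)), (k + d).
  split; [| split; [| split; [| split; [| split]]]].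
  - intro n. split; [apply finite_bundle | apply regular_bundle]; auto. apply Hfin.
  - intro n. apply covering_bundle; [apply Hcovp | apply HirrX | reflexivity].
  - apply regular_bundle; [exact HrY | exact HrF | apply HsY].
  - exact HcovY.
  - intros n a. rewrite down_fiberwise. unfold fiberwise. rewrite (Hdown n). reflexivity.
  - exists (fun n => s n / 3).
    split; [apply tends_to_infty_div; [discriminate | exact Hs] |].
    intro n. destruct (Hiso n) as [Hw _].
    replace (w n, i) with (fiberwise (rho n) (y, i))
      by (unfold fiberwise; cbn; rewrite Hw; reflexivity).
    apply (covering_ball_isometry (s := s n));
      [apply HcovY | | | apply Nat.Div0.mul_div_le].
    + apply simple_bundle; [exact HsY | exact HsF |].
      apply voltage_comap; [apply (Hcovr 0) | exact Hvolt].
    + apply fiberwise_injective_on_ball, (ball_isometry_injective (Hiso n)).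
Qed.
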